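(* Let $C$ be a projective linear code of length $n$ over $\mathbb{Z}_4$ with exactly two nonzero Lee weights $w_1<w_2$. Then the following are equivalent: (1) $C$ is Plotkin-optimal; (2) $w_1=n$; (3) $w_2=|C|/2$.
   Context: A linear code of length $n$ over $\mathbb{Z}_4$ is a $\mathbb{Z}_4$-submodule of $\mathbb{Z}_4^n$. Lee weight: $w_L(0)=0,w_L(1)=1,w_L(2)=2,w_L(3)=1$, additive on vectors; $d_L(C)$ is the minimum nonzero Lee weight. $C$ is Plotkin-optimal if $d_L(C)=\lfloor\frac{|C|}{|C|-1}n\rfloor$. $C$ is projective if its dual with respect to $\sum x_iy_i\in\mathbb{Z}_4$ has minimum Lee distance at least $3$. *)

From mathcomp Require Import all_boot all_order all_algebra.
Set Implicit Arguments. Unset Strict Implicit. Unset Printing Implicit Defensive.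
Import GRing.Theory.
Local Open Scope ring_scope.

Definition Z4 := 'Z_4.

Definition leeZ4 (a : Z4) : nat := minn (val a) (4 - val a).

Definition wL n (x : 'rV[Z4]_n) : nat := (\sum_(i < n) leeZ4 (x ord0 i))%N.

Definition is_Z4_linear n (C : {set 'rV[Z4]_n}) : Prop :=
  [/\ (0 : 'rV[Z4]_n) \in C,
      (forall x y, x \in C -> y \in C -> x + y \in C) &
      (forall (a : Z4) x, x \in C -> a *: x \in C)].

(* Minimum nonzero Lee weight (defaults to 2n, the maximal weight, if C = {0}) *)
Definition dL n (C : {set 'rV[Z4]_n}) : nat :=
  \big[minn/(2 * n)%N]_(x in C | x != 0) wL x.

Definition dual_code n (C : {set 'rV[Z4]_n}) : {set 'rV[Z4]_n} :=
  [set y : 'rV[Z4]_n | [forall x in C, \sum_(i < n) x ord0 i * y ord0 i == 0]].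

Definition projective n (C : {set 'rV[Z4]_n}) : Prop :=
  forall y, y \in dual_code C -> y != 0 -> (3 <= wL y)%N.

Definition plotkin_optimal n (C : {set 'rV[Z4]_n}) : Prop :=
  dL C = ((#|C| * n) %/ (#|C| - 1))%N.

Definition nonzero_weights_are n (C : {set 'rV[Z4]_n}) (w1 w2 : nat) : Prop :=
  forall w, (exists2 x, x \in C & x != 0 /\ wL x = w) <-> (w = w1 \/ w = w2).

From mathcomp Require Import all_boot all_order all_algebra zify ring.
Import Order.TTheory GRing.Theory Num.Theory.
Set Implicit Arguments. Unset Strict Implicit. Unset Printing Implicit Defensive.
Local Open Scope ring_scope.

(* With chi a = Re (i ^ a), the Lee weight of a word x of length n is
   n - sum_k chi (x_k).  Projectivity supplies, for every coordinate i, a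
   codeword that is odd at i, and for every pair i != j a codeword whose
   (i, j)-entries are (2, 0) or (0, 2).  Translating the code by these
   codewords shows that sum_C chi (x_i) = 0, sum_C chi (x_i)^2 = |C|/2 and
   sum_C chi (x_i) chi (x_j) = 0, which yields the first two Lee power moments.
   With only two nonzero weights, sum_C (wL x - w1) (wL x - w2) = w1 w2, so
   2 |C| (n - w1) (n - w2) + |C| n = 2 w1 w2, and since d_L(C) = w1 the three
   conditions become equivalent by elementary arithmetic. *)

Section TranslationInvariance.

Variables (V : finZmodType) (C : {set V}).
Hypothesis C_zmod : zmod_closed C.

Lemma sum_translate (R : nmodType) (f : V -> R) t : t \in C ->
  \sum_(x in C) f (x + t) = \sum_(x in C) f x.
Proof.
move=> tC; have [C0 CB] := C_zmod.
have Nt : - t \in C by rewrite -sub0r CB.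
rewrite [RHS](reindex (fun x => x + t)) /=; last first.
  by exists (fun x => x - t) => x _; rewrite ?addrK ?subrK.
apply: eq_bigl => x; apply/idP/idP => [xC|].
  by rewrite -[t]opprK CB.
by move/CB/(_ tC); rewrite addrK.
Qed.

Lemma sum_antiperiodic_eq0 (R : numDomainType) (f : V -> R) t : t \in C ->
  (forall x, f (x + t) = - f x) -> \sum_(x in C) f x = 0.
Proof.
move=> tC ft; have := sum_translate f tC.
under eq_bigr => x _ do rewrite ft.
rewrite sumrN => SN; apply/eqP.
by rewrite -[_ == 0]/(false || _) -(mulrn_eq0 _ 2) mulr2n -{1}SN addNr.
Qed.

Lemma sum_complementary (R : nzRingType) (f : V -> R) t : t \in C ->
  (forall x, f (x + t) + f x = 1) -> (\sum_(x in C) f x) *+ 2 = #|C|%:R.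
Proof.
move=> tC ft; rewrite mulr2n -{1}(sum_translate f tC) -big_split /=.
by under eq_bigr => x _ do rewrite ft; rewrite sumr_const.
Qed.

End TranslationInvariance.

(* [chi a] is the real part of [i ^ a]. *)
Definition chi (a : Z4) : int :=
  if val a == 0%N then 1 else if val a == 2%N then -1 else 0.

Lemma leeZ4_chi a : (leeZ4 a)%:Z = 1 - chi a.
Proof. by case: a => -[|[|[|[|?]]]] ?. Qed.

Lemma leeZ4_le2 a : (leeZ4 a <= 2)%N.
Proof. by case: a => -[|[|[|[|?]]]] ?. Qed.

Lemma chiD2 a : chi (a + 2) = - chi a.
Proof. by case: a => -[|[|[|[|?]]]] ?. Qed.

Lemma Z4_double_odd (u : Z4) : u * 2 != 0 -> u + u = 2.
Proof. by move=> u2; apply/eqP; move: u2; case: u => -[|[|[|[|?]]]] ?. Qed.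

Lemma chi_sqrD_odd (u a : Z4) : u * 2 != 0 -> chi (a + u) ^+ 2 + chi a ^+ 2 = 1.
Proof. by case: a => -[|[|[|[|a]]]] Ha; case: u => -[|[|[|[|u]]]] Hu. Qed.

(* An explicit list, since [enum Z4] is locked and does not reduce. *)
Definition Z4_elems : seq Z4 := [:: 0; 1; 2; 3].

Lemma mem_Z4_elems a : a \in Z4_elems.
Proof. by case: a => -[|[|[|[|?]]]] ?. Qed.

Lemma all_Z4_elems (P : pred Z4) : all P Z4_elems -> forall a, P a.
Proof. by move/allP => PZ a; apply: PZ; apply: mem_Z4_elems. Qed.

Lemma Z4_span_even_split (r1 r2 s1 s2 : Z4) : r1 + r2 != 0 -> s1 - s2 != 0 ->
  exists c1 c2 : Z4,
    (c1 * r1 + c2 * s1, c1 * r2 + c2 * s2) \in [:: (2, 0); (0, 2)].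
Proof.
have check : all (fun r1 : Z4 => all (fun r2 : Z4 => all (fun s1 : Z4 =>
  all (fun s2 : Z4 => (r1 + r2 != 0) ==> (s1 - s2 != 0) ==>
    has (fun c1 : Z4 => has (fun c2 : Z4 =>
      (c1 * r1 + c2 * s1, c1 * r2 + c2 * s2) \in [:: (2, 0); (0, 2)])
    Z4_elems) Z4_elems) Z4_elems) Z4_elems) Z4_elems) Z4_elems.
  by vm_compute.
move=> r12 s12.
have := all_Z4_elems (all_Z4_elems (all_Z4_elems (all_Z4_elems check r1) r2) s1) s2.
by rewrite r12 s12 => /hasP[c1 _ /hasP[c2 _ c12]]; exists c1, c2.
Qed.

Definition dotZ4 n (x y : 'rV[Z4]_n) : Z4 := \sum_(i < n) x ord0 i * y ord0 i.

Lemma dotZ4Dr n (x y z : 'rV[Z4]_n) : dotZ4 x (y + z) = dotZ4 x y + dotZ4 x z.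
Proof. by rewrite -big_split; apply: eq_bigr => k _; rewrite mxE mulrDr. Qed.

Lemma dotZ4_delta n (x : 'rV[Z4]_n) (i : 'I_n) (a : Z4) :
  dotZ4 x (a *: delta_mx ord0 i) = x ord0 i * a.
Proof.
rewrite /dotZ4 (bigD1 i) //= big1 ?addr0 => [|k /negbTE ki]; rewrite !mxE ?eqxx.
  by rewrite mulr1.
by rewrite ki !mulr0.
Qed.

Lemma wL0 n : wL (0 : 'rV[Z4]_n) = 0%N.
Proof. by rewrite /wL big1 // => i _; rewrite mxE. Qed.

Lemma wL_le n (x : 'rV[Z4]_n) : (wL x <= 2 * n)%N.
Proof.
have : (wL x <= \sum_(i < n) 2)%N by apply: leq_sum => i _; apply: leeZ4_le2.
by rewrite sum_nat_const card_ord mulnC.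
Qed.

Lemma wL_delta n (i : 'I_n) (a : Z4) : wL (a *: delta_mx ord0 i) = leeZ4 a.
Proof.
rewrite /wL (bigD1 i) //= big1 ?addn0 => [|k /negbTE ki]; rewrite !mxE ?eqxx.
  by rewrite mulr1.
by rewrite ki mulr0.
Qed.

Lemma wL_delta2 n (i j : 'I_n) (a b : Z4) : i != j ->
  wL (a *: delta_mx ord0 i + b *: delta_mx ord0 j) = (leeZ4 a + leeZ4 b)%N.
Proof.
move=> ij; have ji : (j == i) = false by rewrite eq_sym (negbTE ij).
rewrite /wL (bigD1 i) // (bigD1 j) 1?eq_sym //= big1 ?addn0.
  rewrite !mxE !eqxx (negbTE ij) ji /=.
  by rewrite !(mulr1n, mulr0n, mulr1, mulr0, addr0, add0r).
move=> k /andP[/negbTE ki /negbTE kj].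
by rewrite !mxE ki kj /= !(mulr0n, mulr0, addr0).
Qed.

Lemma dL_nonzero_weights n (C : {set 'rV[Z4]_n}) w1 w2 :
  nonzero_weights_are C w1 w2 -> (w1 <= w2)%N -> dL C = w1.
Proof.
move=> C_wts w12; have [x xC [x0 wx]] : exists2 x, x \in C & x != 0 /\ wL x = w1.
  by apply/C_wts; left.
apply/eqP; rewrite /dL -minEnat eq_le; apply/andP; split.
  by rewrite -wx; apply: bigmin_le_cond; rewrite xC x0.
apply: le_bigmin => [|y /andP[yC y0]]; first by rewrite -wx; apply: wL_le.
have [] : wL y = w1 \/ wL y = w2 by apply/C_wts; exists y.
  by move=> ->.
by move=> ->.
Qed.

Lemma projective_witness n (C : {set 'rV[Z4]_n}) y : projective C ->
  (0 < wL y <= 2)%N -> exists2 x, x \in C & dotZ4 x y != 0.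
Proof.
move=> CP /andP[wy_gt0 wy_le2].
have y0 : y != 0 by apply: contraTneq wy_gt0 => ->; rewrite wL0.
have : y \notin dual_code C.
  by apply: contraTN wy_le2 => /CP/(_ y0); rewrite -ltnNge.
by rewrite inE negb_forall => /existsP[x]; rewrite negb_imply => /andP[]; exists x.
Qed.

Lemma Z4_linear_zmod_closed n (C : {set 'rV[Z4]_n}) :
  is_Z4_linear C -> zmod_closed C.
Proof. by case=> C0 CD CZ; split=> // x y xC yC; rewrite -scaleN1r CD ?CZ. Qed.

Section CoordinateMoments.

Variables (n : nat) (C : {set 'rV[Z4]_n}).
Hypotheses (C_lin : is_Z4_linear C) (C_proj : projective C).

Let C_zmod := Z4_linear_zmod_closed C_lin.

Lemma odd_coord_witness i : exists2 u, u \in C & u ord0 i * 2 != 0.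
Proof.
have [|u uC] := projective_witness (y := 2 *: delta_mx ord0 i) C_proj.
  by rewrite wL_delta.
by rewrite dotZ4_delta; exists u.
Qed.

Lemma sum_chi_coord i : \sum_(x in C) chi (x ord0 i) = 0.
Proof.
have [u uC u2] := odd_coord_witness i; have [_ CD _] := C_lin.
apply: (sum_antiperiodic_eq0 C_zmod (CD _ _ uC uC)) => x.
by rewrite !mxE Z4_double_odd ?chiD2.
Qed.

Lemma sum_chi_coord_sqr i : (\sum_(x in C) chi (x ord0 i) ^+ 2) *+ 2 = #|C|%:R.
Proof.
have [u uC u2] := odd_coord_witness i.
by apply: (sum_complementary C_zmod uC) => x; rewrite !mxE chi_sqrD_odd.
Qed.

Lemma sum_chi_coord_pair i j : i != j ->
  \sum_(x in C) chi (x ord0 i) * chi (x ord0 j) = 0.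
Proof.
move=> ij.
have [|r rC r_ij] := projective_witness
  (y := 1 *: delta_mx ord0 i + 1 *: delta_mx ord0 j) C_proj.
  by rewrite wL_delta2.
have [|s sC s_ij] := projective_witness
  (y := 1 *: delta_mx ord0 i + (-1) *: delta_mx ord0 j) C_proj.
  by rewrite wL_delta2.
rewrite !(dotZ4Dr, dotZ4_delta, mulr1, mulrN1) in r_ij s_ij.
have [c1 [c2 c12]] := Z4_span_even_split r_ij s_ij.
have [_ CD CZ] := C_lin.
apply: (sum_antiperiodic_eq0 C_zmod (CD _ _ (CZ c1 _ rC) (CZ c2 _ sC))) => x.
rewrite !mxE; move: c12; rewrite !inE !xpair_eqE => /orP[] /andP[/eqP-> /eqP->].
  by rewrite chiD2 addr0 mulNr.
by rewrite chiD2 addr0 mulrN.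
Qed.

End CoordinateMoments.

Definition chi_row n (x : 'rV[Z4]_n) : int := \sum_i chi (x ord0 i).

Lemma wL_chi_row n (x : 'rV[Z4]_n) : (wL x)%:Z = n%:Z - chi_row x.
Proof.
rewrite /wL -natz natr_sum (eq_bigr (fun i => 1 - chi (x ord0 i))).
  by rewrite sumrB sumr_const card_ord natz.
by move=> i _; rewrite natz leeZ4_chi.
Qed.

Section WeightMoments.

Variables (n : nat) (C : {set 'rV[Z4]_n}).
Hypotheses (C_lin : is_Z4_linear C) (C_proj : projective C).

Lemma sum_chi_row : \sum_(x in C) chi_row x = 0.
Proof. by rewrite exchange_big big1 // => i _; apply: sum_chi_coord. Qed.

Lemma sum_chi_row_sqr : (\sum_(x in C) chi_row x ^+ 2) *+ 2 = #|C|%:R *+ n.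
Proof.
under eq_bigr => x _ do rewrite /chi_row expr2 big_distrlr /=.
rewrite exchange_big -sumrMnl.
have -> : #|C|%:R *+ n = \sum_(i < n) (#|C|%:R : int) by rewrite sumr_const card_ord.
apply: eq_bigr => i _; rewrite exchange_big -sumrMnl (bigD1 i) //=.
rewrite [X in _ + X]big1 => [|j ji]; last by rewrite sum_chi_coord_pair 1?eq_sym.
rewrite addr0 -(sum_chi_coord_sqr C_lin C_proj i).
by congr (_ *+ 2); apply: eq_bigr => x _; rewrite expr2.
Qed.

Lemma two_weight_identity w1 w2 : nonzero_weights_are C w1 w2 ->
  2 * (#|C|%:Z * ((n%:Z - w1%:Z) * (n%:Z - w2%:Z))) + #|C|%:Z * n%:Z
  = 2 * (w1%:Z * w2%:Z).
Proof.
move=> C_wts.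
(* Only x = 0 contributes: every nonzero codeword has weight w1 or w2. *)
have vanish : \sum_(x in C) ((wL x)%:Z - w1%:Z) * ((wL x)%:Z - w2%:Z) = w1%:Z * w2%:Z.
  have [C0 _ _] := C_lin.
  rewrite (bigD1 0) //= wL0 big1 ?addr0; first by rewrite !sub0r mulrNN.
  move=> x /andP[xC x0].
  have [] : wL x = w1 \/ wL x = w2 by apply/C_wts; exists x.
    by move=> ->; rewrite subrr mul0r.
  by move=> ->; rewrite subrr mulr0.
have expand (x : 'rV[Z4]_n) : ((wL x)%:Z - w1%:Z) * ((wL x)%:Z - w2%:Z) =
    (n%:Z - w1%:Z) * (n%:Z - w2%:Z) - (2 * n%:Z - w1%:Z - w2%:Z) * chi_row x
    + chi_row x ^+ 2.
  by rewrite wL_chi_row; ring.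
rewrite (eq_bigr _ (fun x _ => expand x)) in vanish.
rewrite big_split sumrB sumr_const -mulr_sumr sum_chi_row /= mulr0 subr0 in vanish.
have sqr := sum_chi_row_sqr.
move: vanish sqr; move: (\sum_(x in C) _) => T.
have mulrnz (a : int) k : a *+ k = a * k%:Z by rewrite -natz mulr_natr.
rewrite natz !mulrnz => <- sqr.
by rewrite -sqr; ring.
Qed.

End WeightMoments.

Section TwoWeightArithmetic.

Variables (M n w1 w2 : nat).
Hypotheses (n_gt0 : (0 < n)%N) (M_gt1 : (1 < M)%N) (w12 : (w1 < w2)%N).
Hypothesis moments :
  2 * (M%:Z * ((n%:Z - w1%:Z) * (n%:Z - w2%:Z))) + M%:Z * n%:Z = 2 * (w1%:Z * w2%:Z).

Lemma min_weight_lengthP : w1 = n <-> (2 * w2)%N = M.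
Proof.
split=> [w1n | M2].
  by move: moments; rewrite w1n; nia.
have := moments; rewrite -M2 PoszM => moments2.
have : (2 * w2%:Z) * ((n%:Z - w1%:Z) * (2 * (n%:Z - w2%:Z) + 1)) = 0 by lia.
by move/eqP; rewrite !mulf_eq0 => /or3P[| /eqP| /eqP]; lia.
Qed.

Lemma plotkin_floorP : w1 = ((M * n) %/ (M - 1))%N <-> w1 = n.
Proof.
split=> [w1E | w1n].
  have n_le_w1 : (n <= w1)%N by rewrite w1E leq_divRL; lia.
  have w1_le : (w1 * (M - 1) <= M * n)%N by rewrite w1E leq_divM.
  apply/eqP; rewrite eqn_leq n_le_w1 andbT; apply: contraTT w1_le => w1_gt_n.
  clear w1E; rewrite -ltnNge; nia.
have M2 := proj1 min_weight_lengthP w1n.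
have -> : (M * n = n * (M - 1) + n)%N by lia.
by rewrite divnMDl ?divn_small ?addn0 //; lia.
Qed.

End TwoWeightArithmetic.

Theorem corollary4p4 (n : nat) (C : {set 'rV[Z4]_n}) (w1 w2 : nat) :
  is_Z4_linear C -> projective C ->
  (w1 < w2)%N -> nonzero_weights_are C w1 w2 ->
  [/\ (plotkin_optimal C <-> w1 = n),
      (w1 = n <-> (2 * w2)%N = #|C|) &
      (plotkin_optimal C <-> (2 * w2)%N = #|C|)].
Proof.
move=> C_lin C_proj w12 C_wts.
have [x1 x1C [x10 _]] : exists2 x, x \in C & x != 0 /\ wL x = w1.
  by apply/C_wts; left.
have [x2 _ [_ wx2]] : exists2 x, x \in C & x != 0 /\ wL x = w2.
  by apply/C_wts; right.
have n_gt0 : (0 < n)%N by have := wL_le x2; rewrite wx2; lia.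
have C_gt1 : (1 < #|C|)%N.
  by have [C0 _ _] := C_lin; apply/card_gt1P; exists 0, x1; rewrite C0 x1C eq_sym x10.
have moments := two_weight_identity C_lin C_proj C_wts.
have weightP := min_weight_lengthP n_gt0 C_gt1 w12 moments.
have plotkinP : plotkin_optimal C <-> w1 = n.
  rewrite /plotkin_optimal (dL_nonzero_weights C_wts (ltnW w12)).
  exact: plotkin_floorP n_gt0 C_gt1 w12 moments.
by split=> //; rewrite plotkinP.
Qed.
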